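(* For $r>0$ with $r\neq 1$, $0<p<1$, $q=1-p$, and $x\in\{0,1,2,\dots\}$, let $$p_X(x;r,p)=\frac{q^{x}p^{r}}{1+x}\binom{r+x-1}{x}\,{}_2F_1(1,r+x;2+x;q)$$ denote the probability mass function of the $\mathcal{UNB}(r,p)$ distribution. Then $$p_X(x;r,p)=\frac{r}{(r-1)(r+x)p}\Big(\big(2r+x-(r+x)q\big)\,p_X(x;r+1,p)-(r+1)\,p_X(x;r+2,p)\Big).$$
   Context: For real $r>0$, $\binom{r+x-1}{x}=\frac{\Gamma(r+x)}{x!\,\Gamma(r)}$. ${}_2F_1(a,b;c;z)=\sum_{n\ge0}\frac{(a)_n(b)_n}{(c)_n}\frac{z^n}{n!}$ for $|z|<1$, with $(s)_n=s(s+1)\cdots(s+n-1)$, $(s)_0=1$. $\mathcal{UNB}(r,p)$ is the law of $X$ where $N$ is negative binomial with $P(N=n)=\binom{r+n-1}{n}p^rq^n$ and $X\mid N=n$ is uniform on $\{0,\dots,n\}$. *)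

From Stdlib Require Import Reals.
From Coquelicot Require Import Coquelicot.
Open Scope R_scope.

Fixpoint rising (s : R) (n : nat) : R :=
  match n with
  | O => 1
  | S m => rising s m * (s + INR m)
  end.

(* generalized binomial coefficient binom(r+x-1, x) = Gamma(r+x)/(x! Gamma(r))
   = (r)_x / x!  (Gamma(r+x)/Gamma(r) = (r)_x for r > 0) *)
Definition gbinom (r : R) (x : nat) : R := rising r x / INR (Factorial.fact x).

Definition hyp2F1 (a b c z : R) : R :=
  Series (fun n => rising a n * rising b n / rising c n * z ^ n / INR (Factorial.fact n)).

Definition pX (r p : R) (x : nat) : R :=
  (1 - p) ^ x * Rpower p r / (1 + INR x) * gbinom r x
  * hyp2F1 1 (r + INR x) (2 + INR x) (1 - p).

(** Writing [q = 1 - p], the series of [pX r p x] collapses to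
    [p^r * sum_k (r)_(x+k) q^(x+k) / (x+k+1)!].  Multiplying a term by
    [r + x + k] shifts [r] to [r + 1], so both sides of the identity are
    series in the same terms [a_k] weighted by polynomials in [k]; their
    difference is [b_(k+1) - b_k] with [b_k = k (x+k+1) a_k], because
    [(x+k+2) a_(k+1) = q (r+x+k) a_k].  As [b_0 = 0] and [b_k -> 0], it sums
    to [0]. *)

From Stdlib Require Import Reals Lra Lia Factorial.
From Coquelicot Require Import Coquelicot.
Open Scope R_scope.

Lemma rising_add (s : R) (m n : nat) :
  rising s (m + n) = rising s m * rising (s + INR m) n.
Proof.
  induction n as [|n IH]; simpl.
  - rewrite Nat.add_0_r. ring.
  - rewrite Nat.add_succ_r. simpl. rewrite IH, plus_INR. ring.
Qed.

Lemma rising_succ (s : R) (n : nat) : rising s (S n) = s * rising (s + 1) n.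
Proof. change (S n) with (1 + n)%nat. rewrite rising_add. simpl. ring. Qed.

Lemma rising_1 (n : nat) : rising 1 n = INR (fact n).
Proof.
  induction n as [|n IH]; simpl rising; [reflexivity|].
  rewrite IH. change (fact (S n)) with (S n * fact n)%nat.
  rewrite mult_INR, S_INR. ring.
Qed.

Lemma fact_add_rising (m n : nat) :
  INR (fact (m + n)) = INR (fact m) * rising (INR m + 1) n.
Proof. rewrite <- !rising_1, rising_add, (Rplus_comm 1). reflexivity. Qed.

Lemma rising_pos (s : R) (n : nat) : 0 < s -> 0 < rising s n.
Proof.
  intros Hs. induction n as [|n IH]; simpl; [lra|].
  pose proof (pos_INR n). apply Rmult_lt_0_compat; lra.
Qed.

Lemma is_lim_seq_ratio_affine (al be : R) : 0 < be ->
  is_lim_seq (fun k => (al + INR k) / (be + INR k)) 1.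
Proof.
  intros Hb.
  assert (Hinf : is_lim_seq (fun k => be + INR k) p_infty).
  { eapply is_lim_seq_plus; [apply is_lim_seq_const | apply is_lim_seq_INR | reflexivity]. }
  apply is_lim_seq_inv in Hinf; [|discriminate]. simpl in Hinf.
  apply is_lim_seq_scal_l with (a := al - be) in Hinf.
  apply is_lim_seq_plus' with (u := fun _ => 1) (l1 := 1) in Hinf;
    [|apply is_lim_seq_const].
  simpl in Hinf. rewrite Rmult_0_r, Rplus_0_r in Hinf.
  eapply is_lim_seq_ext; [|exact Hinf].
  intros k; simpl. pose proof (pos_INR k). field. lra.
Qed.

Lemma is_series_telescoping (b : nat -> R) :
  ex_series b -> is_series (fun k => b (S k) - b k) (- b O).
Proof.
  intros Hb. apply Series_correct in Hb.
  replace (- b O) with (Series b - b O - Series b) by ring.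
  apply (is_series_minus (fun k => b (S k)) b); [|exact Hb].
  apply is_series_incr_1. unfold plus; simpl.
  replace (Series b - b O + b O) with (Series b) by ring. exact Hb.
Qed.

Definition pmf_term (q s : R) (x k : nat) : R :=
  rising s (x + k) * q ^ (x + k) / INR (fact (x + k + 1)).

Lemma pX_series (r p : R) (x : nat) :
  pX r p x = Rpower p r * Series (pmf_term (1 - p) r x).
Proof.
  unfold pX, hyp2F1, gbinom.
  rewrite <- !Series_scal_l. apply Series_ext. intros n.
  unfold pmf_term.
  replace (x + n + 1)%nat with (S x + n)%nat by lia.
  rewrite rising_1, rising_add, pow_add, fact_add_rising.
  change (fact (S x)) with (S x * fact x)%nat.
  rewrite mult_INR, S_INR.
  replace (INR x + 1 + 1) with (2 + INR x) by ring.
  assert (0 < rising (2 + INR x) n) by (apply rising_pos; pose proof (pos_INR x); lra).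
  pose proof (INR_fact_neq_0 x). pose proof (INR_fact_neq_0 n). pose proof (pos_INR x).
  field. repeat split; lra.
Qed.

Lemma pmf_term_pos (q s : R) (x k : nat) : 0 < q -> 0 < s -> 0 < pmf_term q s x k.
Proof.
  intros. unfold pmf_term. apply Rdiv_lt_0_compat; [|apply INR_fact_lt_0].
  apply Rmult_lt_0_compat; [apply rising_pos | apply pow_lt]; auto.
Qed.

Lemma pmf_term_succ (q s : R) (x k : nat) :
  pmf_term q s x (S k) * (INR x + INR k + 2) = q * (s + INR x + INR k) * pmf_term q s x k.
Proof.
  unfold pmf_term. rewrite Nat.add_succ_r.
  replace (S (x + k) + 1)%nat with (S (x + k + 1)) by lia.
  change (fact (S (x + k + 1))) with (S (x + k + 1) * fact (x + k + 1))%nat.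
  simpl rising. simpl pow. rewrite mult_INR, S_INR, !plus_INR. simpl INR.
  pose proof (INR_fact_neq_0 (x + k + 1)). pose proof (pos_INR x). pose proof (pos_INR k).
  field. lra.
Qed.

Lemma pmf_term_shift (q s : R) (x k : nat) :
  s * pmf_term q (s + 1) x k = (s + INR x + INR k) * pmf_term q s x k.
Proof.
  unfold pmf_term. pose proof (INR_fact_neq_0 (x + k + 1)).
  replace (s * _) with (rising s (S (x + k)) * q ^ (x + k) / INR (fact (x + k + 1)))
    by (rewrite rising_succ; field; auto).
  simpl rising. rewrite plus_INR. field. auto.
Qed.

Lemma ex_series_pmf_term (q s : R) (x : nat) :
  0 < q < 1 -> 0 < s -> ex_series (pmf_term q s x).
Proof.
  intros Hq Hs.
  pose proof (pos_INR x) as Hx.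
  assert (Hpos : forall k, 0 < pmf_term q s x k) by (intros; apply pmf_term_pos; lra).
  assert (Hratio : is_lim_seq
      (fun k => Rabs (pmf_term q s x (S k) / pmf_term q s x k)) q).
  { assert (Hlim := is_lim_seq_scal_l _ q _
      (is_lim_seq_ratio_affine (s + INR x) (INR x + 2) ltac:(lra))).
    simpl in Hlim. rewrite Rmult_1_r in Hlim.
    eapply is_lim_seq_ext; [|exact Hlim]. intros k.
    pose proof (Hpos k). pose proof (Hpos (S k)). pose proof (pos_INR k).
    rewrite Rabs_pos_eq by (apply Rlt_le, Rdiv_lt_0_compat; auto).
    apply (Rmult_eq_reg_r (pmf_term q s x k * (INR x + 2 + INR k))); [|nra].
    replace (pmf_term q s x (S k) / pmf_term q s x k * _)
      with (pmf_term q s x (S k) * (INR x + INR k + 2)) by (field; lra).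
    rewrite pmf_term_succ. field. lra. }
  eapply ex_series_ext; [|exact (ex_series_DAlembert _ q ltac:(lra)
                                   (fun k => Rgt_not_eq _ _ (Hpos k)) Hratio)].
  intros k. apply Rabs_pos_eq, Rlt_le, Hpos.
Qed.

Section Recurrence.
Variables (q r : R) (x : nat).
Hypotheses (Hq : 0 < q < 1) (Hr : 0 < r).

Let T (s : R) : R := Series (pmf_term q s x).

Let b (k : nat) : R := INR k * (INR x + INR k + 1) * pmf_term q r x k.

Lemma pmf_term_shift2 (k : nat) :
  r * (r + 1) * pmf_term q (r + 2) x k
  = (r + INR x + INR k) * (r + INR x + INR k + 1) * pmf_term q r x k.
Proof.
  replace (r + 2) with (r + 1 + 1) by ring.
  rewrite Rmult_assoc, pmf_term_shift.
  replace (r * _) with ((r + 1 + INR x + INR k) * (r * pmf_term q (r + 1) x k)) by ring.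
  rewrite pmf_term_shift. ring.
Qed.

Lemma ex_series_b : ex_series b.
Proof.
  apply (ex_series_le b (fun k => r * (r + 1) * pmf_term q (r + 2) x k)).
  - intros k. change (norm (b k)) with (Rabs (b k)). unfold b.
    rewrite pmf_term_shift2.
    pose proof (pos_INR x). pose proof (pos_INR k).
    pose proof (pmf_term_pos q r x k ltac:(lra) Hr).
    rewrite Rabs_pos_eq by (apply Rmult_le_pos; [|lra]; nra).
    apply Rmult_le_compat_r; [lra|].
    apply Rmult_le_compat; lra.
  - exact (ex_series_scal_l (r * (r + 1)) _ (ex_series_pmf_term q (r + 2) x Hq ltac:(lra))).
Qed.

Lemma pmf_term_combination_telescopes (k : nat) :
  (2 * r + INR x - (r + INR x) * q) * (r * pmf_term q (r + 1) x k)
  - (1 - q) * (r * (r + 1) * pmf_term q (r + 2) x k)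
  - (r - 1) * (r + INR x) * pmf_term q r x k
  = b (S k) - b k.
Proof.
  unfold b. rewrite pmf_term_shift, pmf_term_shift2, S_INR.
  replace ((INR k + 1) * (INR x + (INR k + 1) + 1) * pmf_term q r x (S k))
    with ((INR k + 1) * (pmf_term q r x (S k) * (INR x + INR k + 2))) by ring.
  rewrite pmf_term_succ. ring.
Qed.

Lemma pmf_series_recurrence :
  (r - 1) * (r + INR x) * T r
  = (2 * r + INR x - (r + INR x) * q) * (r * T (r + 1))
    - (1 - q) * (r * (r + 1) * T (r + 2)).
Proof.
  assert (HT : forall s, 0 < s -> is_series (pmf_term q s x) (T s))
    by (intros; apply Series_correct, ex_series_pmf_term; auto).
  assert (Hcomb := is_series_minus _ _ _ _
    (is_series_minus _ _ _ _
       (is_series_scal_l (2 * r + INR x - (r + INR x) * q) _ _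
          (is_series_scal_l r _ _ (HT (r + 1) ltac:(lra))))
       (is_series_scal_l (1 - q) _ _
          (is_series_scal_l (r * (r + 1)) _ _ (HT (r + 2) ltac:(lra)))))
    (is_series_scal_l ((r - 1) * (r + INR x)) _ _ (HT r Hr))).
  eapply is_series_ext in Hcomb; [|exact pmf_term_combination_telescopes].
  assert (Hzero := is_series_unique _ _ Hcomb).
  rewrite (is_series_unique _ _ (is_series_telescoping b ex_series_b)) in Hzero.
  unfold b, plus, opp, scal in Hzero; simpl in Hzero. unfold mult in Hzero; simpl in Hzero.
  lra.
Qed.

End Recurrence.

Theorem theorem2 (r p : R) (x : nat) :
  0 < r -> r <> 1 -> 0 < p < 1 ->
  pX r p x =
  r / ((r - 1) * (r + INR x) * p) *
  ((2 * r + INR x - (r + INR x) * (1 - p)) * pX (r + 1) p x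
   - (r + 1) * pX (r + 2) p x).
Proof.
  intros Hr Hr1 Hp.
  pose proof (pos_INR x).
  assert (Hrec := pmf_series_recurrence (1 - p) r x ltac:(lra) Hr).
  rewrite !pX_series, !Rpower_plus, Rpower_1 by lra.
  replace (Rpower p 2) with (p * p)
    by (replace 2 with (INR 2) by (simpl; ring); rewrite Rpower_pow by lra; simpl; ring).
  replace (1 - (1 - p)) with p in Hrec by ring.
  assert (Hr1x : (r - 1) * (r + INR x) <> 0)
    by (apply Rmult_integral_contrapositive_currified; lra).
  apply (Rmult_eq_reg_l ((r - 1) * (r + INR x))); [|exact Hr1x].
  rewrite <- Rmult_assoc, (Rmult_comm _ (Rpower p r)), Rmult_assoc, Hrec.
  field. lra.
Qed.
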